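(* Let $P$ be a program and $\sigma\in C_{\mathrm{Power}}(P)$ a Power computation. Then a load $(t,i)$ reads its value from a store $(t,i')$ via an early-read transition if and only if (1) $\sigma=\sigma_1\cdot(\mathrm{load},t,i,a)\cdot\sigma_2\cdot(\mathrm{commit},t,i',k,a)\cdot\sigma_3$ for some $k$ and some $i'\in\{1,\dots,i-1\}$, and (2) $\sigma_3$ contains no event of the form $(\mathrm{commit},t,j,k',a)$ with $j\in\{i'+1,\dots,i-1\}$ and arbitrary $k'$.
   Context: Programs. Fix a finite set $D$ of values, which also serve as addresses, with $0\in D$, and a finite set $\mathit{Reg}$ of registers taking values in $D$. Expressions are built from constants in $D$, registers, and functions over $D\cup\{\bot\}$ that return $\bot$ iff some argument is $\bot$. Commands are loads $r\leftarrow \mathrm{mem}[e]$, stores $\mathrm{mem}[e]\leftarrow e'$, assignments $r\leftarrow e$, and $\mathrm{assume}(e)$. A thread is a finite automaton whose transitions (instructions) are labeled by commands; a program is a finite sequence of threads with ids $1,\dots,|P|$. $(t,i)$ denotes the $i$-th fetched instruction of thread $t$. Power semantics. A state consists of, for each thread $t$, a runtime state $(F,C,L)$ ($F$ the sequence of fetched instructions, $C$ the set of committed indices, $L$ mapping each index to $\bot$ or to the store read by the load there: an initial store $\mathrm{init}_a$ of value $0$ to $a$, or a pair $(t',i')$), and a storage state $(co,prop)$ ($co$ assigns rational coherence keys to committed stores, initial stores have key $0$; $prop(t,a)$ is the last store to $a$ propagated to $t$, initially $\mathrm{init}_a$). Register values for instruction $(t,i)$ come from the latest earlier fetched assignment or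 load to the register ($0$ if none; a load gives $\bot$ if unsatisfied, $0$ if it read an initial store, else the value of the store read); $\mathrm{addr}$ and $\mathrm{val}$ denote evaluated address/value arguments. Address/data dependencies are earlier instructions an address/value depends on via registers; control dependencies are earlier assumes. Transitions: (fetch) append an instruction of $T_t$ continuing from the last fetched one's target state, event $(\mathrm{fetch},t,\text{instr})$; (load from memory) load $i$ with $L[i]=\bot$ and address $a\ne\bot$: $L[i]:=prop(t,a)$, event $(\mathrm{load},t,i,a)$; (early read) same event, if the greatest $i'<i$ that is a store with address in $\{a,\bot\}$ has address $a$, value $\ne\bot$ and is uncommitted: $L[i]:=(t,i')$; (commit) uncommitted $i$ with committed address/data/control dependencies, address and value $\ne\bot$, all earlier instructions with the same or unknown address committed, $L[i]\ne\bot$ for loads, value $\ne0$ for assumes: event $(\mathrm{commit},t,i)$; for a store additionally a fresh key $k$ is set as $co(t,i)$, event $(\mathrm{commit},t,i,k,a)$, immediately followed by propagation to $t$; (propagate) committed store $(t',i')$ to $a$ with $co(prop(t,a))<co(t',i')$: $prop(t,a):=(t',i')$, event $(\mathrm{prop},t,t',i',a)$. Final states: all fetched instructions committed; for loads $i'<i$ of a thread to the same address, $co(L[i'])\le co(L[i])$; for a store $i'$ and later load $i$ of a thread to the same address, $co(t,i')\le co(L[i])$. $C_{\mathrm{Power}}(P)$ is the set of event sequences leading from the initial state (nothing fetched) to a final state. *)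

(* Power operational semantics (Derevenetc--Meyer style). *)
From mathcomp Require Import all_boot all_order all_algebra.
From Stdlib Require List.

Set Implicit Arguments.
Unset Strict Implicit.
Unset Printing Implicit Defensive.

Section Power.

Variables (D : finType) (zero : D) (Reg : finType).

(* A strict function (returning ⊥ iff some argument is ⊥) is determined by
   its restriction to D, given here as [f : seq D -> D] applied to the list
   of argument values. *)
Inductive expr : Type :=
| EConst of D
| EReg of Reg
| EFun of (seq D -> D) & seq expr.

Inductive cmd : Type :=
| CLoad of Reg & expr
| CStore of expr & expr        (* mem[e] <- e'     *)
| CAssign of Reg & expr
| CAssume of expr.

(* An instruction = a transition (source control state, command, target). *)
Record instr : Type := Instr { isrc : nat; icmd : cmd; itgt : nat }.

Record thread : Type := Thread { tinit : nat; ttrans : seq instr }.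

(* A program: a finite sequence of threads, with ids 1..|P|. *)
Definition program := seq thread.

Definition thread_of (P : program) (t : nat) : thread :=
  nth (Thread 0 [::]) P t.-1.

Definition valid_tid (P : program) (t : nat) : bool := (0 < t <= size P).

(* Stores that a load can read: the initial store init_a, or (t', i'). *)
Inductive src : Type := Init of D | St of nat & nat.

(* States: for each thread t the runtime state (F t, C t, L t), and the
   storage state (co, prop). Instruction indices are 1-based. *)
Record state : Type := State {
  sF : nat -> seq instr;                (* fetched instructions          *)
  sC : nat -> nat -> bool;              (* committed indices             *)
  sL : nat -> nat -> option src;        (* store read by a load (None=⊥) *)
  sco : nat -> nat -> option rat;       (* coherence key of committed stores *)
  sprop : nat -> D -> src               (* last store to a propagated to t *)
}.

Definition init_state : state :=
  State (fun _ => [::]) (fun _ _ => false) (fun _ _ => None)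
        (fun _ _ => None) (fun _ a => Init a).

Definition cmd_at (s : state) (t i : nat) : option cmd :=
  if i == 0 then None else omap icmd (onth (sF s t) i.-1).

Definition fetched (s : state) (t i : nat) : bool := 0 < i <= size (sF s t).

Definition writes (r : Reg) (oc : option cmd) : bool :=
  match oc with
  | Some (CLoad r' _) | Some (CAssign r' _) => r' == r
  | _ => false
  end.

Definition is_assume (oc : option cmd) : bool :=
  if oc is Some (CAssume _) then true else false.

Definition last_writer (s : state) (t i : nat) (r : Reg) (j : nat) : Prop :=
  [/\ 0 < j < i, writes r (cmd_at s t j) &
      forall j', j < j' < i -> ~~ writes r (cmd_at s t j')].

(* Register and expression values (None = ⊥), as seen by instruction (t,i). *)
Inductive regv (s : state) : nat -> nat -> Reg -> option D -> Prop :=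
| regv_none t i r :
    (forall j, 0 < j < i -> ~~ writes r (cmd_at s t j)) ->
    regv s t i r (Some zero)
| regv_assign t i r j e v :
    last_writer s t i r j -> cmd_at s t j = Some (CAssign r e) ->
    exprv s t j e v -> regv s t i r v
| regv_load_unsat t i r j e :
    last_writer s t i r j -> cmd_at s t j = Some (CLoad r e) ->
    sL s t j = None -> regv s t i r None
| regv_load_init t i r j e a :
    last_writer s t i r j -> cmd_at s t j = Some (CLoad r e) ->
    sL s t j = Some (Init a) -> regv s t i r (Some zero)
| regv_load_st t i r j e t' i' ea ev v :
    last_writer s t i r j -> cmd_at s t j = Some (CLoad r e) ->
    sL s t j = Some (St t' i') -> cmd_at s t' i' = Some (CStore ea ev) ->
    exprv s t' i' ev v -> regv s t i r v
with exprv (s : state) : nat -> nat -> expr -> option D -> Prop :=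
| exprv_const t i d : exprv s t i (EConst d) (Some d)
| exprv_reg t i r v : regv s t i r v -> exprv s t i (EReg r) v
| exprv_fun t i f es vs :
    exprsv s t i es vs ->
    exprv s t i (EFun f es)
      (if all (fun o : option D => o) vs then Some (f (pmap id vs)) else None)
with exprsv (s : state) : nat -> nat -> seq expr -> seq (option D) -> Prop :=
| exprsv_nil t i : exprsv s t i [::] [::]
| exprsv_cons t i e es v vs :
    exprv s t i e v -> exprsv s t i es vs -> exprsv s t i (e :: es) (v :: vs).

Definition addr (s : state) (t i : nat) (a : option D) : Prop :=
  match cmd_at s t i with
  | Some (CLoad _ e) | Some (CStore e _) => exprv s t i e a
  | _ => False
  end.

Definition storeval (s : state) (t i : nat) (v : option D) : Prop :=
  match cmd_at s t i with
  | Some (CStore _ e) => exprv s t i e v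
  | _ => False
  end.

Definition is_store (oc : option cmd) : bool :=
  if oc is Some (CStore _ _) then true else false.
Definition is_load (oc : option cmd) : bool :=
  if oc is Some (CLoad _ _) then true else false.

Fixpoint regs_of (e : expr) : seq Reg :=
  match e with
  | EConst _ => [::]
  | EReg r => [:: r]
  | EFun _ es => flatten (map regs_of es)
  end.

Definition deps_committed (s : state) (t i : nat) (e : expr) : Prop :=
  forall r j, r \in regs_of e -> last_writer s t i r j -> sC s t j.

Definition earlier_same_addr_committed (s : state) (t i : nat) (a : D) : Prop :=
  forall j, 0 < j < i -> (addr s t j None \/ addr s t j (Some a)) -> sC s t j.

Definition ctrl_committed (s : state) (t i : nat) : Prop :=
  forall j, 0 < j < i -> is_assume (cmd_at s t j) -> sC s t j.

Definition can_commit (s : state) (t i : nat) : Prop :=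
  [/\ fetched s t i, ~~ sC s t i, ctrl_committed s t i &
  match cmd_at s t i with
  | Some (CLoad _ e) =>
      deps_committed s t i e /\
      exists a, [/\ exprv s t i e (Some a), earlier_same_addr_committed s t i a
                  & sL s t i <> None]
  | Some (CStore e e') =>
      deps_committed s t i e /\ deps_committed s t i e' /\
      exists a v, [/\ exprv s t i e (Some a), exprv s t i e' (Some v)
                    & earlier_same_addr_committed s t i a]
  | Some (CAssign _ e) =>
      deps_committed s t i e /\ exists v, exprv s t i e (Some v)
  | Some (CAssume e) =>
      deps_committed s t i e /\ exists v, exprv s t i e (Some v) /\ v != zero
  | None => False
  end].

Definition co_of (s : state) (x : src) : rat :=
  match x with Init _ => 0%R | St t i => odflt 0%R (sco s t i) end.

Definition upd1 {T : Type} (f : nat -> T) (t : nat) (x : T) : nat -> T :=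
  fun t' => if t' == t then x else f t'.
Definition upd2 {T : Type} (f : nat -> nat -> T) (t i : nat) (x : T) :=
  fun t' i' => if (t' == t) && (i' == i) then x else f t' i'.
Definition updP (f : nat -> D -> src) (t : nat) (a : D) (x : src) :=
  fun t' a' => if (t' == t) && (a' == a) then x else f t' a'.

Definition set_F s F := State F (sC s) (sL s) (sco s) (sprop s).
Definition set_C s C := State (sF s) C (sL s) (sco s) (sprop s).
Definition set_L s L := State (sF s) (sC s) L (sco s) (sprop s).
Definition set_co s co := State (sF s) (sC s) (sL s) co (sprop s).
Definition set_prop s pr := State (sF s) (sC s) (sL s) (sco s) pr.

Inductive event : Type :=
| EvFetch of nat & instr
| EvLoad of nat & nat & D
| EvCommit of nat & nat
| EvCommitSt of nat & nat & rat & D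
| EvProp of nat & nat & nat & D.

(* Transitions, recording which rule was used. *)
Inductive trans : Type :=
| TFetch of nat & instr
| TLoadMem of nat & nat & D
| TEarly of nat & nat & nat & D       (* TEarly t i i' a : early read L[i] := (t,i') *)
| TCommit of nat & nat
| TCommitSt of nat & nat & rat & D
| TProp of nat & nat & nat & D.

Definition events_of (tr : trans) : seq event :=
  match tr with
  | TFetch t ins => [:: EvFetch t ins]
  | TLoadMem t i a => [:: EvLoad t i a]
  | TEarly t i _ a => [:: EvLoad t i a]
  | TCommit t i => [:: EvCommit t i]
  | TCommitSt t i k a => [:: EvCommitSt t i k a; EvProp t t i a]
  | TProp t t' i' a => [:: EvProp t t' i' a]
  end.

Definition last_target (P : program) (s : state) (t : nat) : nat :=
  if sF s t is [::] then tinit (thread_of P t)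
  else itgt (last (Instr 0 (CAssume (EConst zero)) 0) (sF s t)).

Inductive step (P : program) : state -> trans -> state -> Prop :=
| st_fetch s t ins :
    valid_tid P t -> List.In ins (ttrans (thread_of P t)) ->
    isrc ins = last_target P s t ->
    step P s (TFetch t ins) (set_F s (upd1 (sF s) t (rcons (sF s t) ins)))
| st_loadmem s t i a :
    is_load (cmd_at s t i) -> sL s t i = None -> addr s t i (Some a) ->
    step P s (TLoadMem t i a) (set_L s (upd2 (sL s) t i (Some (sprop s t a))))
| st_early s t i i' a v :
    is_load (cmd_at s t i) -> sL s t i = None -> addr s t i (Some a) ->
    0 < i' < i -> is_store (cmd_at s t i') -> addr s t i' (Some a) ->
    (forall j, i' < j < i -> is_store (cmd_at s t j) ->
       ~ (addr s t j None \/ addr s t j (Some a))) ->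
    storeval s t i' (Some v) -> ~~ sC s t i' ->
    step P s (TEarly t i i' a) (set_L s (upd2 (sL s) t i (Some (St t i'))))
| st_commit s t i :
    ~~ is_store (cmd_at s t i) -> can_commit s t i ->
    step P s (TCommit t i) (set_C s (upd2 (sC s) t i true))
| st_commitst s t i k a :
    is_store (cmd_at s t i) -> can_commit s t i -> addr s t i (Some a) ->
    k != 0%R -> (forall t' i', sco s t' i' <> Some k) ->
    (* the immediately following propagation to t *)
    (co_of s (sprop s t a) < k)%R ->
    step P s (TCommitSt t i k a)
      (set_prop (set_co (set_C s (upd2 (sC s) t i true)) (upd2 (sco s) t i (Some k)))
                (updP (sprop s) t a (St t i)))
| st_prop s t t' i' a k :
    valid_tid P t -> sco s t' i' = Some k -> addr s t' i' (Some a) ->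
    (co_of s (sprop s t a) < k)%R ->
    step P s (TProp t t' i' a) (set_prop s (updP (sprop s) t a (St t' i'))).

Inductive run (P : program) : state -> seq trans -> state -> Prop :=
| run_nil s : run P s [::] s
| run_cons s tr s' trs s'' :
    step P s tr s' -> run P s' trs s'' -> run P s (tr :: trs) s''.

Definition final (s : state) : Prop :=
  [/\ (forall t i, fetched s t i -> sC s t i),
      (forall t i' i a x' x, 0 < i' < i ->
         is_load (cmd_at s t i') -> is_load (cmd_at s t i) ->
         addr s t i' (Some a) -> addr s t i (Some a) ->
         sL s t i' = Some x' -> sL s t i = Some x -> (co_of s x' <= co_of s x)%R) &
      (forall t i' i a k x, i' < i ->
         is_store (cmd_at s t i') -> is_load (cmd_at s t i) ->
         addr s t i' (Some a) -> addr s t i (Some a) ->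
         sco s t i' = Some k -> sL s t i = Some x -> (k <= co_of s x)%R)].

Definition run_events (trs : seq trans) : seq event := flatten (map events_of trs).

Definition C_Power (P : program) (sigma : seq event) : Prop :=
  exists trs sf, [/\ run P init_state trs sf, final sf & sigma = run_events trs].

End Power.

From mathcomp Require Import all_boot all_order all_algebra zify.
From Stdlib Require List.

Set Implicit Arguments.
Unset Strict Implicit.
Unset Printing Implicit Defensive.

Import Order.TTheory.

(* An early read of (t,i) from (t,i') happens while the store (t,i') is still
   uncommitted; a final state is fully committed, so (t,i') is committed later,
   by a store commit carrying the load's address: this is (1).  Everything else
   rests on one coherence fact: in a final run, if a store (t,j) to a with j < i
   is committed after some point, the load (t,i) reads a store with a larger
   coherence key than the store to a visible to t at that point.  After the
   early read t sees (t,i') itself, which gives (2).  Conversely, a load event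
   followed by the commit of (t,i') cannot be a read from memory, since the
   store read was visible before that commit.  So it is an early read from
   some (t,i''): i'' < i' would skip the store (t,i'), and i'' > i' forces
   (t,i'') to be committed after (t,i') (stores to one address commit in
   program order), which (2) forbids. *)

Scheme regv_mind := Induction for regv Sort Prop
  with exprv_mind := Induction for exprv Sort Prop
  with exprsv_mind := Induction for exprsv Sort Prop.

Section Evaluation.
Variables (D : finType) (zero : D) (Reg : finType).
Local Notation state := (state D Reg).
Local Notation expr := (expr D Reg).
Local Notation regv := (regv zero).
Local Notation exprv := (exprv zero).
Local Notation exprsv := (exprsv zero).
Implicit Types (s : state) (t i j : nat) (r : Reg).

Lemma isSome_cmd_at s t i : cmd_at s t i = fetched s t i :> bool.
Proof. by rewrite /cmd_at /fetched; case: i => //= i; rewrite -onthTE; case: onth. Qed.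

Lemma cmd_at_fetched s t i c : cmd_at s t i = Some c -> fetched s t i.
Proof. by move=> E; rewrite -isSome_cmd_at E. Qed.

Lemma is_store_fetched s t i : is_store (cmd_at s t i) -> fetched s t i.
Proof. by rewrite -isSome_cmd_at; case: (cmd_at s t i). Qed.

Lemma is_load_fetched s t i : is_load (cmd_at s t i) -> fetched s t i.
Proof. by rewrite -isSome_cmd_at; case: (cmd_at s t i). Qed.

Lemma fetched_below s t i j : i <= size (sF s t) -> 0 < j < i -> fetched s t j.
Proof. by move=> ? /andP[? ?]; apply/andP; split=> //; lia. Qed.

Definition extends s s' :=
  (forall t i, fetched s t i -> cmd_at s' t i = cmd_at s t i) /\
  (forall t j x, sL s t j = Some x -> sL s' t j = Some x).

Lemma extends_refl s : extends s s.
Proof. by []. Qed.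

Lemma extends_trans s1 s2 s3 : extends s1 s2 -> extends s2 s3 -> extends s1 s3.
Proof.
move=> [C12 L12] [C23 L23]; split=> [t i fi|t j x /L12 /L23 //].
have E := C12 t i fi; rewrite C23 // -isSome_cmd_at E isSome_cmd_at //.
Qed.

Lemma extends_cmd_at s s' t i c :
  extends s s' -> cmd_at s t i = Some c -> cmd_at s' t i = Some c.
Proof. by move=> [C _] E; rewrite C ?E //; apply: cmd_at_fetched E. Qed.

Lemma extends_is_store s s' t i :
  extends s s' -> is_store (cmd_at s t i) -> is_store (cmd_at s' t i).
Proof.
by move=> X; case ci: (cmd_at s t i) => [c|] //; rewrite (extends_cmd_at X ci).
Qed.

Lemma extends_is_load s s' t i :
  extends s s' -> is_load (cmd_at s t i) -> is_load (cmd_at s' t i).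
Proof.
by move=> X; case ci: (cmd_at s t i) => [c|] //; rewrite (extends_cmd_at X ci).
Qed.

Lemma last_writer_extends s s' t i r j : extends s s' -> i <= size (sF s t) ->
  last_writer s t i r j -> last_writer s' t i r j.
Proof.
move=> [C _] le_i [ji wj after]; have /andP[j0 _] := ji.
split=> //; first by rewrite C //; apply: fetched_below ji.
move=> j' jj'; rewrite C; first exact: after.
by apply: fetched_below le_i _; case/andP: jj' => ? ->; rewrite andbT; lia.
Qed.

Lemma last_writer_uniq s t i r j1 j2 :
  last_writer s t i r j1 -> last_writer s t i r j2 -> j1 = j2.
Proof.
move=> [/andP[_ lt1] w1 after1] [/andP[_ lt2] w2 after2].
case: (ltngtP j1 j2) => // lt12.
- by move: (after1 j2); rewrite lt12 lt2 w2 => /(_ isT).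
- by move: (after2 j1); rewrite lt12 lt1 w1 => /(_ isT).
Qed.

Lemma last_writerP s t n r :
  (forall j, 0 < j < n -> ~~ writes r (cmd_at s t j)) \/
  exists j, last_writer s t n r j.
Proof.
elim: n => [|n IH]; first by left=> j /andP[_]; rewrite ltn0.
have [wn | nwn] := boolP (writes r (cmd_at s t n)).
  right; exists n; split=> //; last by move=> j /andP[? ?]; exfalso; lia.
  by rewrite ltnSn andbT lt0n; apply: contraTneq wn => ->.
case: IH => [none | [j [/andP[j0 jn] wj after]]].
  left=> j /andP[j0]; rewrite ltnS leq_eqVlt => /orP[/eqP-> // | jn].
  by apply: none; rewrite j0.
right; exists j; split=> //; first by rewrite j0 ltnW.
move=> j' /andP[jj']; rewrite ltnS leq_eqVlt => /orP[/eqP-> // | j'n].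
by apply: after; rewrite jj'.
Qed.

(* Bottom must be excluded: an unsatisfied load may be satisfied later. *)
Lemma exprv_extends s s' t i e v : extends s s' -> exprv s t i e v ->
  v <> None -> i <= size (sF s t) -> exprv s' t i e v.
Proof.
move=> X; have [_ L] := X; move: t i e v.
apply: (@exprv_mind D zero Reg s
  (fun t i r v _ => v <> None -> i <= size (sF s t) -> regv s' t i r v)
  (fun t i e v _ => v <> None -> i <= size (sF s t) -> exprv s' t i e v)
  (fun t i es vs _ => all (fun o : option D => o) vs -> i <= size (sF s t) ->
                      exprsv s' t i es vs)).
- move=> t i r none _ le_i; apply: regv_none => j ji.
  by rewrite X.1; [exact: none | exact: fetched_below ji].
- move=> t i r j e v lw cj _ IH v0 le_i.
  apply: regv_assign (last_writer_extends X le_i lw) (extends_cmd_at X cj) (IH v0 _).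
  by case: lw => /andP[_ ji] _ _; lia.
- by [].
- move=> t i r j e a lw cj Lj _ le_i.
  exact: regv_load_init (last_writer_extends X le_i lw) (extends_cmd_at X cj) (L _ _ _ Lj).
- move=> t i r j e t' i' ea ev v lw cj Lj ci' _ IH v0 le_i.
  apply: regv_load_st (last_writer_extends X le_i lw) (extends_cmd_at X cj)
    (L _ _ _ Lj) (extends_cmd_at X ci') (IH v0 _).
  by case/andP: (cmd_at_fetched ci').
- by move=> *; apply: exprv_const.
- by move=> t i r v _ IH v0 le_i; apply/exprv_reg/IH.
- move=> t i f es vs _ IH v0 le_i; apply/exprv_fun/IH => //.
  by move: v0; case: all.
- by move=> *; apply: exprsv_nil.
- move=> t i e es v vs _ IH1 _ IH2 /= /andP[dv dvs] le_i.
  by apply: exprsv_cons; [apply: IH1 => // v0; rewrite v0 in dv | exact: IH2].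
Qed.

Lemma no_last_writer s t i r j :
  (forall j, 0 < j < i -> ~~ writes r (cmd_at s t j)) -> ~ last_writer s t i r j.
Proof. by move=> none [/none /negbTE ->]. Qed.

Ltac same_last_writer :=
  first
  [ by exfalso; apply: no_last_writer; eassumption
  | match goal with
    | L1 : last_writer ?s ?t ?i ?r ?j1, L2 : last_writer ?s ?t ?i ?r ?j2 |- _ =>
        have E := last_writer_uniq L1 L2; subst j2; clear L2
    end ].

Ltac same_source :=
  match goal with
  | H1 : ?x = Some _, H2 : ?x = Some _ |- _ => rewrite H1 in H2; case: H2 => *; subst
  end.

Lemma exprv_functional s t i e v v' :
  exprv s t i e v -> exprv s t i e v' -> v = v'.
Proof.
move=> ev; move: t i e v ev v'.
apply: (@exprv_mind D zero Reg s
  (fun t i r v _ => forall v', regv s t i r v' -> v = v')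
  (fun t i e v _ => forall v', exprv s t i e v' -> v = v')
  (fun t i es vs _ => forall vs', exprsv s t i es vs' -> vs = vs')).
- by move=> t i r none v' rv; inversion rv; subst => //; same_last_writer.
- move=> t i r j e v lw cj _ IH v' rv; inversion rv; subst; same_last_writer;
    repeat same_source; try congruence.
  by apply: IH; eassumption.
- by move=> t i r j e lw cj Lj v' rv; inversion rv; subst; same_last_writer;
    repeat same_source; congruence.
- by move=> t i r j e a lw cj Lj v' rv; inversion rv; subst; same_last_writer;
    repeat same_source; congruence.
- move=> t i r j e t' i' ea ev v lw cj Lj ci' _ IH v' rv; inversion rv; subst;
    same_last_writer; repeat same_source; try congruence.
  by apply: IH; eassumption.
- by move=> t i d v' ev; inversion ev.
- by move=> t i r v _ IH v' ev; inversion ev; subst; exact: IH.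
- move=> t i f es vs _ IH v' ev; inversion ev; subst.
  by match goal with E : exprsv _ _ _ _ _ |- _ => rewrite (IH _ E) end.
- by move=> t i vs' evs; inversion evs.
- move=> t i e es v vs _ IH1 _ IH2 vs' evs; inversion evs; subst.
  match goal with
  | E : exprv _ _ _ _ _, Es : exprsv _ _ _ _ _ |- _ => by rewrite (IH1 _ E) (IH2 _ Es)
  end.
Qed.

(* The generated [expr_ind] has no hypothesis for the arguments of [EFun]. *)
Fixpoint expr_nested_ind (Pe : expr -> Prop) (Ps : seq expr -> Prop)
  (hconst : forall d, Pe (EConst Reg d)) (hreg : forall r, Pe (EReg D r))
  (hfun : forall f es, Ps es -> Pe (EFun f es)) (hnil : Ps [::])
  (hcons : forall e es, Pe e -> Ps es -> Ps (e :: es)) (e : expr) : Pe e :=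
  match e with
  | EConst d => hconst d
  | EReg r => hreg r
  | EFun f es => hfun f es ((fix args es : Ps es :=
      match es with
      | [::] => hnil
      | e :: es => hcons e es (expr_nested_ind hconst hreg hfun hnil hcons e) (args es)
      end) es)
  end.

Definition store_defined s t i := exists ea ev v,
  cmd_at s t i = Some (CStore ea ev) /\ exprv s t i ev (Some v).

Definition reads_defined s :=
  forall t j t' i', sL s t j = Some (St D t' i') -> store_defined s t' i'.

Lemma store_defined_extends s s' t i :
  extends s s' -> store_defined s t i -> store_defined s' t i.
Proof.
move=> X [ea [ev [v [ci evv]]]]; exists ea, ev, v; split; first exact: extends_cmd_at X ci.
by apply: exprv_extends X evv _ _; case/andP: (cmd_at_fetched ci).
Qed.

Lemma exprv_total s t i e : reads_defined s -> exists v, exprv s t i e v.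
Proof.
move=> rd; elim/ltn_ind: i e => i IH.
have regv_total r : exists v, regv s t i r v.
  case: (last_writerP s t i r) => [none | [j lw]]; first by exists (Some zero); apply: regv_none.
  have [/andP[_ ji] + _] := lw.
  case cj: (cmd_at s t j) => [[r' e|ea ev|r' e|e]|] //= /eqP r'r; subst r'.
  - case Lj: (sL s t j) => [[a|t' i']|].
    + by exists (Some zero); exact: regv_load_init lw cj Lj.
    + have [ea [ev [v [ci' evv]]]] := rd _ _ _ _ Lj.
      by exists (Some v); exact: regv_load_st lw cj Lj ci' evv.
    + by exists None; exact: regv_load_unsat lw cj Lj.
  - by have [v ev] := IH j ji e; exists v; exact: regv_assign lw cj ev.
apply: (@expr_nested_ind _ (fun es => exists vs, exprsv s t i es vs)).
- by move=> d; eexists; apply: exprv_const.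
- by move=> r; have [v rv] := regv_total r; exists v; apply: exprv_reg.
- by move=> f es [vs evs]; eexists; apply: exprv_fun evs.
- by eexists; apply: exprsv_nil.
- by move=> e es [v ev] [vs evs]; eexists; apply: exprsv_cons ev evs.
Qed.

Local Notation addr := (addr zero).

Lemma addr_extends s s' t i a :
  extends s s' -> addr s t i (Some a) -> addr s' t i (Some a).
Proof.
move=> X; rewrite /addr; case ci: (cmd_at s t i) => [c|] //.
rewrite (extends_cmd_at X ci); have /andP[_ le_i] := cmd_at_fetched ci.
by case: c ci => // [r e|e e'] _ ea; apply: exprv_extends X ea _ _.
Qed.

Lemma addr_functional s t i w1 w2 : addr s t i w1 -> addr s t i w2 -> w1 = w2.
Proof.
rewrite /addr; case: (cmd_at s t i) => [[r e|e e'|r e|e]|] //.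
all: exact: exprv_functional.
Qed.

Lemma addr_total s t i :
  reads_defined s -> is_store (cmd_at s t i) -> exists w, addr s t i w.
Proof.
by move=> rd; rewrite /addr; case: (cmd_at s t i) => [[r e|e e'|r e|e]|] // _;
  apply: exprv_total.
Qed.

End Evaluation.

Section Runs.
Variables (D : finType) (zero : D) (Reg : finType) (P : program D Reg).
Local Notation state := (state D Reg).
Local Notation step := (step zero P).
Local Notation run := (run zero P).
Local Notation addr := (addr zero).
Local Notation store_defined := (store_defined zero).
Implicit Types (s : state) (t i j : nat) (a : D).

Definition keyed s (x : src D) :=
  if x is St t i then sco s t i <> None else True.

(* An invariant of reachable states: it makes addresses evaluable and
   coherence keys permanent. *)
Definition wf_state s :=
  [/\ reads_defined zero s, forall t a, keyed s (sprop s t a) &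
      forall t i, sco s t i <> None -> store_defined s t i /\ sC s t i].

Lemma wf_init : wf_state (init_state D Reg).
Proof. by split. Qed.

Lemma wf_prop_keyed s t a : wf_state s -> keyed s (sprop s t a).
Proof. by case. Qed.

Lemma step_extends s tr s' : step s tr s' -> extends s s'.
Proof.
case=> {s tr s'}; try by split.
- move=> s t ins _ _ _; split=> // t' i /andP[i0 le_i].
  rewrite /cmd_at /= /upd1; case: i i0 le_i => //= i _.
  by case: (eqVneq t' t) => [-> le_i | //]; rewrite -cats1 onth_cat le_i.
- move=> s t i a _ Li _; split=> // t' j x /=; rewrite /upd2.
  by case: andP => // [[/eqP-> /eqP->]]; rewrite Li.
- move=> s t i i' a v _ Li *; split=> // t' j x /=; rewrite /upd2.
  by case: andP => // [[/eqP-> /eqP->]]; rewrite Li.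
Qed.

Lemma step_committed s tr s' t i : step s tr s' -> sC s t i -> sC s' t i.
Proof. by case=> {s tr s'} //= s t0 i0 *; rewrite /upd2; case: andP. Qed.

Lemma uncommitted_unkeyed s t i : wf_state s -> ~~ sC s t i -> sco s t i = None.
Proof.
move=> [_ _ keyed_ok] nc; case k: (sco s t i) => [k'|] //.
by have [_ c] := keyed_ok t i (ltac:(by rewrite k)); rewrite c in nc.
Qed.

Lemma step_key s tr s' t i k :
  wf_state s -> step s tr s' -> sco s t i = Some k -> sco s' t i = Some k.
Proof.
move=> W S; case: S W => {s' tr} //= s0 t0 i0 k0 a0 _ [_ nc _ _] _ _ _ _ W.
by rewrite /upd2; case: andP => // [[/eqP -> /eqP ->]]; rewrite uncommitted_unkeyed.
Qed.

Lemma step_keyed s tr s' x : wf_state s -> step s tr s' -> keyed s x ->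
  keyed s' x /\ co_of s' x = co_of s x.
Proof.
move=> W S; case: x => //= t i; case k: (sco s t i) => [k'|] // _.
by rewrite (step_key W S k).
Qed.

Lemma step_reads_defined s tr s' :
  wf_state s -> step s tr s' -> reads_defined zero s'.
Proof.
move=> W S; have X := step_extends S; case: S X W => {s tr s'}.
- by move=> s t ins _ _ _ X [rd _ _] t' j t2 i2 /rd; apply: store_defined_extends X.
- move=> s t i a _ _ _ X [rd kp ko] t' j t2 i2 /=; rewrite /upd2.
  case: andP => [_ [E] | _ /rd]; last apply: store_defined_extends X.
  by apply: (store_defined_extends X); move: (kp t a); rewrite E => /ko [].
- move=> s t i i' a v _ _ _ _ st_i' _ _ val_i' _ X [rd _ _] t' j t2 i2 /=; rewrite /upd2.
  case: andP => [_ [<- <-] | _ /rd]; last apply: store_defined_extends X.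
  apply: (store_defined_extends X); move: st_i' val_i'; rewrite /storeval /is_store.
  by case ci: (cmd_at s t i') => [[r e|ea ev|r e|e]|] // _ val; exists ea, ev, v.
- by move=> s t i _ _ X [rd _ _] t' j t2 i2 /rd; apply: store_defined_extends X.
- by move=> s t i k a _ _ _ _ _ _ X [rd _ _] t' j t2 i2 /rd; apply: store_defined_extends X.
- by move=> s t t' i' a k _ _ _ _ X [rd _ _] t0 j t2 i2 /rd; apply: store_defined_extends X.
Qed.

Lemma step_prop_keyed s tr s' t a :
  wf_state s -> step s tr s' -> keyed s' (sprop s' t a).
Proof.
move=> W S; have [kx _] := step_keyed W S (wf_prop_keyed t a W).
case: S kx W => {tr s'}; try by move=> * /=.
- move=> s0 t0 i0 k a0 _ _ _ _ _ _ kx _ /=; rewrite /updP.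
  by case: andP => [_ | _ //]; rewrite /keyed /= /upd2 !eqxx.
- move=> s0 t0 t' i' a0 k _ k_i' _ _ kx _ /=; rewrite /updP.
  by case: andP => [_ | _ //]; rewrite /keyed /= k_i'.
Qed.

Lemma step_keys_defined s tr s' t i : wf_state s -> step s tr s' ->
  sco s' t i <> None -> store_defined s' t i /\ sC s' t i.
Proof.
move=> W S; have X := step_extends S; case: S X W => {s tr s'}.
- by move=> s t0 ins _ _ _ X [_ _ ko] /ko [sd c];
    split=> //; apply: store_defined_extends X sd.
- by move=> s t0 i0 a _ _ _ X [_ _ ko] /ko [sd c];
    split=> //; apply: store_defined_extends X sd.
- by move=> s t0 i0 i' a v _ _ _ _ _ _ _ _ _ X [_ _ ko] /ko [sd c];
    split=> //; apply: store_defined_extends X sd.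
- move=> s t0 i0 _ _ X [_ _ ko] /ko [sd c]; split; first exact: store_defined_extends X sd.
  by rewrite /= /upd2 c; case: andP.
- move=> s t0 i0 k a st_i [_ _ _ cc] _ _ _ _ X [_ _ ko] /=; rewrite /upd2.
  case: andP => [[/eqP -> /eqP ->] _ | _ /ko [sd c]]; last first.
    by split=> //; apply: store_defined_extends X sd.
  split=> //; apply: (store_defined_extends X); move: st_i cc; rewrite /is_store.
  case ci: (cmd_at s t0 i0) => [[r e|ea ev|r e|e]|] // _ [_ [_ [a0 [v [_ val _]]]]].
  by exists ea, ev, v.
- by move=> s t0 t' i' a k _ _ _ _ X [_ _ ko] /ko [sd c];
    split=> //; apply: store_defined_extends X sd.
Qed.

Lemma step_wf s tr s' : wf_state s -> step s tr s' -> wf_state s'.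
Proof.
move=> W S; split=> [|t a|t i]; first exact: step_reads_defined W S.
  exact: step_prop_keyed W S.
exact: step_keys_defined W S.
Qed.

Lemma step_prop_le s tr s' t a : wf_state s -> step s tr s' ->
  (co_of s (sprop s t a) <= co_of s' (sprop s' t a))%R.
Proof.
move=> W S; have [_ E] := step_keyed W S (wf_prop_keyed t a W).
case: S E W => {tr s'};
  try by move=> *; match goal with E : co_of _ _ = _ |- _ => rewrite /= E end.
- move=> s0 t0 i0 k a0 _ _ _ _ _ lt_k E _ /=.
  rewrite /updP; case: andP => [[/eqP -> /eqP ->] | _]; last by rewrite E.
  by apply/ltW; rewrite /co_of /= /upd2 !eqxx.
- move=> s0 t0 t' i' a0 k _ k_i' _ lt_k E _ /=.
  rewrite /updP; case: andP => [[/eqP -> /eqP ->] | _]; last by rewrite E.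
  by apply/ltW; rewrite /co_of /= k_i'.
Qed.

Lemma run_wf s l s' : wf_state s -> run s l s' -> wf_state s'.
Proof. by move=> + R; elim: R => // s0 tr s1 l0 s2 S _ IH W; apply/IH/(step_wf W S). Qed.

Lemma run_extends s l s' : run s l s' -> extends s s'.
Proof.
elim=> [s0 | s0 tr s1 l0 s2 S _ IH]; first exact: extends_refl.
exact: extends_trans (step_extends S) IH.
Qed.

Lemma run_committed s l s' t i : run s l s' -> sC s t i -> sC s' t i.
Proof. by elim=> // s0 tr s1 l0 s2 S _ IH /(step_committed S). Qed.

Lemma run_keyed s l s' x : wf_state s -> run s l s' -> keyed s x ->
  keyed s' x /\ co_of s' x = co_of s x.
Proof.
move=> + R; elim: R => // s0 tr s1 l0 s2 S _ IH W kx.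
have [kx1 E1] := step_keyed W S kx; have [kx2 E2] := IH (step_wf W S) kx1.
by rewrite E2 E1.
Qed.

Lemma run_key s l s' t i k :
  wf_state s -> run s l s' -> sco s t i = Some k -> sco s' t i = Some k.
Proof.
move=> + R; elim: R => // s0 tr s1 l0 s2 S _ IH W /(step_key W S).
exact/IH/(step_wf W S).
Qed.

Lemma run_prop_le s l s' t a : wf_state s -> run s l s' ->
  (co_of s (sprop s t a) <= co_of s' (sprop s' t a))%R.
Proof.
move=> + R; elim: R => // s0 tr s1 l0 s2 S _ IH W.
exact: le_trans (step_prop_le t a W S) (IH (step_wf W S)).
Qed.

Lemma run_cons_inv s tr l s' :
  run s (tr :: l) s' -> exists s1, step s tr s1 /\ run s1 l s'.
Proof. by move=> R; inversion R; subst; eexists; split; eassumption. Qed.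

Lemma run_cat s l1 l2 s' :
  run s (l1 ++ l2) s' -> exists s1, run s l1 s1 /\ run s1 l2 s'.
Proof.
elim: l1 s => [|tr l1 IH] s /=; first by exists s; split=> //; apply: run_nil.
case/run_cons_inv => s1 [S /IH [s2 [R1 R2]]].
by exists s2; split=> //; apply: run_cons S R1.
Qed.

Lemma run_split s l1 tr l2 s' : run s (l1 ++ tr :: l2) s' ->
  exists s1 s2, [/\ run s l1 s1, step s1 tr s2 & run s2 l2 s'].
Proof.
case/run_cat => s1 [R1 /run_cons_inv [s2 [S R2]]].
by exists s1, s2.
Qed.

Lemma step_early_inv s s' t i i' a : step s (TEarly Reg t i i' a) s' ->
  [/\ is_load (cmd_at s t i), addr s t i (Some a), 0 < i' < i,
      is_store (cmd_at s t i') & addr s t i' (Some a)] /\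
  [/\ ~~ sC s t i',
      forall j, i' < j < i -> is_store (cmd_at s t j) ->
        ~ (addr s t j None \/ addr s t j (Some a)) &
      s' = set_L s (upd2 (sL s) t i (Some (St D t i')))].
Proof. by move=> S; inversion S; subst. Qed.

Lemma step_loadmem_inv s s' t i a : step s (TLoadMem Reg t i a) s' ->
  [/\ is_load (cmd_at s t i), addr s t i (Some a) &
      s' = set_L s (upd2 (sL s) t i (Some (sprop s t a)))].
Proof. by move=> S; inversion S; subst. Qed.

Lemma step_commit_inv s s' t i : step s (TCommit D Reg t i) s' ->
  ~~ is_store (cmd_at s t i).
Proof. by move=> S; inversion S; subst. Qed.

Lemma step_commitst_inv s s' t i k a : step s (TCommitSt Reg t i k a) s' ->
  [/\ is_store (cmd_at s t i), can_commit zero s t i, addr s t i (Some a),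
      (co_of s (sprop s t a) < k)%R &
      s' = set_prop (set_co (set_C s (upd2 (sC s) t i true))
                            (upd2 (sco s) t i (Some k)))
                    (updP (sprop s) t a (St D t i))].
Proof. by move=> S; inversion S; subst. Qed.

Lemma step_commits s tr s' t i : step s tr s' -> ~~ sC s t i -> sC s' t i ->
  tr = TCommit D Reg t i \/ exists k a, tr = TCommitSt Reg t i k a.
Proof.
case=> {s tr s'} /=; try by move=> *; exfalso; apply/negP; eassumption.
- by move=> s t0 i0 _ _; rewrite /upd2; case: andP => [[/eqP-> /eqP->] | _ /negbTE->]; left.
- move=> s t0 i0 k a _ _ _ _ _ _; rewrite /upd2.
  by case: andP => [[/eqP-> /eqP->] | _ /negbTE->] //; right; exists k, a.
Qed.

Lemma run_first_commit s l s' t i : run s l s' -> ~~ sC s t i -> sC s' t i ->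
  exists l1 tr l2 s1 s2, [/\ l = l1 ++ tr :: l2, run s l1 s1, step s1 tr s2,
    run s2 l2 s' & tr = TCommit D Reg t i \/ exists k a, tr = TCommitSt Reg t i k a].
Proof.
elim=> [s0 /negbTE-> // | s0 tr s1 l0 s2 S R IH nc c].
case c1: (sC s1 t i).
  exists [::], tr, l0, s0, s1; split=> //; first exact: run_nil.
  exact: step_commits S nc c1.
have [l1 [tr' [l2 [sa [sb [-> R1 S' R2 ctr]]]]]] := IH (negbT c1) c.
by exists (tr :: l1), tr', l2, sa, sb; split=> //; apply: run_cons S R1.
Qed.

Lemma run_store_commit s l s' t j a : run s l s' ->
  is_store (cmd_at s t j) -> addr s t j (Some a) -> ~~ sC s t j -> sC s' t j ->
  exists l1 k l2 s1 s2, [/\ l = l1 ++ TCommitSt Reg t j k a :: l2, run s l1 s1,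
    step s1 (TCommitSt Reg t j k a) s2 & run s2 l2 s'].
Proof.
move=> R st_j a_j nc c.
have [l1 [tr [l2 [s1 [s2 [-> R1 S R2 [E | [k [b E]]]]]]]]] := run_first_commit R nc c;
  subst tr.
  by move: (step_commit_inv S); rewrite (extends_is_store (run_extends R1) st_j).
have [_ _ b_j _ _] := step_commitst_inv S.
have [<-] := addr_functional b_j (addr_extends (run_extends R1) a_j).
by exists l1, k, l2, s1, s2.
Qed.

Lemma run_addr_store s l s' t j a : wf_state s -> run s l s' ->
  is_store (cmd_at s t j) -> addr s' t j (Some a) ->
  addr s t j None \/ addr s t j (Some a).
Proof.
move=> [rd _ _] R st_j a_j; have [[b|] b_j] := addr_total rd st_j; last by left.
by right; have [<-] := addr_functional (addr_extends (run_extends R) b_j) a_j.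
Qed.

Lemma can_commit_earlier s t i a : can_commit zero s t i -> addr s t i (Some a) ->
  earlier_same_addr_committed zero s t i a.
Proof.
case=> _ _ _; rewrite /addr; case: (cmd_at s t i) => [[r e|e e'|r e|e]|] //.
- by move=> [_ [b [b_i earlier _]]] a_i; have [<-] := exprv_functional b_i a_i.
- by move=> [_ [_ [b [v [b_i _ earlier]]]]] a_i; have [<-] := exprv_functional b_i a_i.
Qed.

Lemma run_commit_order s l s' t i' i'' a : wf_state s -> run s l s' ->
  is_store (cmd_at s t i'') -> addr s t i'' (Some a) -> ~~ sC s t i'' -> sC s' t i'' ->
  0 < i' < i'' -> is_store (cmd_at s' t i') -> addr s' t i' (Some a) -> sC s' t i'.
Proof.
move=> W R st_i'' a_i'' nc c lt_i' st_i' a_i'.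
have [l1 [k [l2 [s1 [s2 [_ R1 S R2]]]]]] := run_store_commit R st_i'' a_i'' nc c.
have [st1 cc1 a1 _ _] := step_commitst_inv S.
have R1' := run_cons S R2.
have /andP[_ le_i''] := is_store_fetched st1.
have st1' : is_store (cmd_at s1 t i').
  by rewrite -(run_extends R1').1 //; apply: fetched_below le_i'' lt_i'.
apply: (run_committed R1'); apply: (can_commit_earlier cc1 a1) => //.
exact: run_addr_store (run_wf W R1) R1' st1' a_i'.
Qed.

Lemma final_store_committed (sf : state) t i :
  final zero sf -> is_store (cmd_at sf t i) -> sC sf t i.
Proof. by move=> [committed _ _] /is_store_fetched; apply: committed. Qed.

Lemma final_read_newer s l sf t i j k a x :
  wf_state s -> run s l sf -> final zero sf ->
  List.In (TCommitSt Reg t j k a) l -> j < i ->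
  is_load (cmd_at sf t i) -> addr sf t i (Some a) -> sL sf t i = Some x ->
  (co_of s (sprop s t a) < co_of sf x)%R.
Proof.
move=> W R [_ _ final_st] /(List.in_split _ _) [l1 [l2 El]] ji ld_i a_i L_i.
rewrite El in R; have [s1 [s2 [R1 S R2]]] := run_split R.
have W1 := run_wf W R1.
have [st_j _ a_j lt_k E2] := step_commitst_inv S.
have X := extends_trans (step_extends S) (run_extends R2).
have k_j : sco sf t j = Some k.
  by apply: run_key (step_wf W1 S) R2 _; rewrite E2 /= /upd2 !eqxx.
have le_k := final_st t j i a k x ji (extends_is_store X st_j) ld_i
  (addr_extends X a_j) a_i k_j L_i.
exact: lt_le_trans (le_lt_trans (run_prop_le t a W R1) lt_k) le_k.
Qed.
End Runs.

Lemma cat_eq_cat_cons (T : Type) (a b c d : seq T) x : a ++ b = c ++ x :: d ->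
  (exists q, a = c ++ x :: q /\ d = q ++ b) \/
  (exists c', c = a ++ c' /\ b = c' ++ x :: d).
Proof.
elim: a c => [|y a IH] [|z c] //=; try by [right; exists (z :: c)].
- by move=> <-; right; exists [::].
- by case=> <- <-; left; exists a.
- case=> -> /IH [[q [-> ->]] | [c' [-> ->]]]; [left; exists q | right; exists c'] => //.
Qed.

(* [++] on [seq] is [cat], which is only convertible to [List.app]. *)
Lemma In_cat (T : Type) (x : T) (s1 s2 : seq T) :
  List.In x (s1 ++ s2) <-> List.In x s1 \/ List.In x s2.
Proof. exact: List.in_app_iff. Qed.

Lemma flatten_map_split (T U : Type) (f : T -> seq U) l s1 x s2 :
  flatten (map f l) = s1 ++ x :: s2 ->
  exists l1 y l2 p q,
    [/\ l = l1 ++ y :: l2, f y = p ++ x :: q & s2 = q ++ flatten (map f l2)].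
Proof.
elim: l s1 => [|y l IH] s1 /=; first by case: s1.
move=> E; case: (cat_eq_cat_cons E) => [[q [fy ->]] | [c [_ /IH]]].
  by exists [::], y, l, s1, q.
case=> l1 [y' [l2 [p [q [-> fy' ->]]]]].
by exists (y :: l1), y', l2, p, q.
Qed.

Section Traces.
Variables (D : finType) (zero : D) (Reg : finType) (P : program D Reg).
Local Notation state := (state D Reg).
Local Notation step := (step zero P).
Local Notation run := (run zero P).
Local Notation addr := (addr zero).
Local Notation wf_state := (@wf_state D zero Reg).
Implicit Types (trs : seq (trans D Reg)) (t i j : nat) (a : D).

Lemma run_events_load trs s1 s2 t i a :
  run_events trs = s1 ++ EvLoad Reg t i a :: s2 ->
  exists tr1 tr tr2, [/\ trs = tr1 ++ tr :: tr2, s2 = run_events tr2 &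
    tr = TLoadMem Reg t i a \/ exists i', tr = TEarly Reg t i i' a].
Proof.
move=> E; have [tr1 [tr [tr2 [p [q [-> + ->]]]]]] := flatten_map_split E.
case: tr => [t0 ins|t0 i0 a0|t0 i0 i1 a0|t0 i0|t0 i0 k0 a0|t0 t1 i0 a0] /=;
  case: p => [|e0 [|e1 [|e2 p]]] //= [] *; subst.
- by exists tr1, (TLoadMem Reg t i a), tr2; split=> //; left.
- by exists tr1, (TEarly Reg t i i1 a), tr2; split=> //; right; exists i1.
Qed.

Lemma run_events_commitst trs s1 s2 t j k a :
  run_events trs = s1 ++ EvCommitSt Reg t j k a :: s2 ->
  exists tr1 tr2, trs = tr1 ++ TCommitSt Reg t j k a :: tr2 /\
                  s2 = EvProp Reg t t j a :: run_events tr2.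
Proof.
move=> E; have [tr1 [tr [tr2 [p [q [-> + ->]]]]]] := flatten_map_split E.
case: tr => [t0 ins|t0 i0 a0|t0 i0 i1 a0|t0 i0|t0 i0 k0 a0|t0 t1 i0 a0] /=;
  case: p => [|e0 [|e1 [|e2 p]]] //= [] *; subst.
by exists tr1, tr2.
Qed.

Lemma in_run_events_commitst trs t j k a :
  List.In (EvCommitSt Reg t j k a) (run_events trs) <->
  List.In (TCommitSt Reg t j k a) trs.
Proof.
elim: trs => [|tr trs IH] //=; rewrite [run_events _]/= In_cat IH.
by case: tr => /= *; intuition congruence.
Qed.

Definition early_read_trace t i i' a (sigma : seq (event D Reg)) : Prop :=
  exists k sigma1 sigma2 sigma3,
    [/\ 0 < i' <= i.-1,
        sigma = sigma1 ++ EvLoad Reg t i a :: sigma2 ++ EvCommitSt Reg t i' k a :: sigma3 &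
        forall j k', i' < j < i -> ~ List.In (EvCommitSt Reg t j k' a) sigma3].

Lemma early_read_trace_of_run tr1 tr2 sf t i i' a :
  run (init_state D Reg) (tr1 ++ TEarly Reg t i i' a :: tr2) sf -> final zero sf ->
  early_read_trace t i i' a (run_events (tr1 ++ TEarly Reg t i i' a :: tr2)).
Proof.
move=> R F; have [s1 [s2 [R1 S R2]]] := run_split R.
have W1 := run_wf (@wf_init D zero Reg) R1.
have [[ld_i a_i lt_i' st_i' a_i'] [nc_i' _ E2]] := step_early_inv S.
have X12 := step_extends S; have X1f := extends_trans X12 (run_extends R2).
have c_i' := final_store_committed F (extends_is_store X1f st_i').
have nc2_i' : ~~ sC s2 t i' by rewrite E2.
have [l1 [k [l2 [sa [sb [-> Ra Sb Rb]]]]]] :=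
  run_store_commit R2 (extends_is_store X12 st_i') (addr_extends X12 a_i') nc2_i' c_i'.
have [_ _ _ _ Eb] := step_commitst_inv Sb.
have Wb := step_wf (run_wf (step_wf W1 S) Ra) Sb.
exists k, (run_events tr1), (run_events l1), (EvProp Reg t t i' a :: run_events l2).
split; first by lia.
  by rewrite /run_events !(map_cat, flatten_cat) /= map_cat flatten_cat.
move=> j k' /andP[_ ji] [// | /in_run_events_commitst in_l2].
have k_i' : sco sf t i' = Some k by apply: run_key Wb Rb _; rewrite Eb /= /upd2 !eqxx.
have L_i : sL sf t i = Some (St D t i') by apply: (run_extends R2).2; rewrite E2 /= /upd2 !eqxx.
have := final_read_newer Wb Rb F in_l2 ji (extends_is_load X1f ld_i) (addr_extends X1f a_i) L_i.
by rewrite Eb /co_of /= /updP /upd2 !eqxx /= ?eqxx k_i' ltxx.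
Qed.

Lemma early_read_source_ge s1 s2 s3 l t i i'' i' a :
  wf_state s1 -> step s1 (TEarly Reg t i i'' a) s2 -> run s2 l s3 -> 0 < i' < i ->
  is_store (cmd_at s3 t i') -> addr s3 t i' (Some a) -> i' <= i''.
Proof.
move=> W1 S R3 lt_i' st3 a3.
have [[ld_i _ _ _ _] [_ skipped _]] := step_early_inv S.
rewrite leqNgt; apply/negP => lt_i''.
have /andP[_ le_i] := is_load_fetched ld_i.
have X13 := extends_trans (step_extends S) (run_extends R3).
have st1 : is_store (cmd_at s1 t i') by rewrite -X13.1 //; apply: fetched_below le_i lt_i'.
apply: (skipped i') => //; first by rewrite lt_i''; case/andP: lt_i'.
exact: run_addr_store W1 (run_cons S R3) st1 a3.
Qed.

Lemma early_read_source_commit s1 s2 s3 s4 sf l l' t i i'' i' k a :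
  wf_state s1 -> step s1 (TEarly Reg t i i'' a) s2 -> run s2 l s3 ->
  step s3 (TCommitSt Reg t i' k a) s4 -> run s4 l' sf -> final zero sf -> i' < i'' ->
  exists k', List.In (TCommitSt Reg t i'' k' a) l'.
Proof.
move=> W1 S R3 S4 R4 F lt_i''.
have [[_ _ _ st_i'' a_i''] [nc_i'' _ E2]] := step_early_inv S.
have [st3 cc3 a3 _ _] := step_commitst_inv S4.
have X12 := step_extends S; have X13 := extends_trans X12 (run_extends R3).
have X14 := extends_trans X13 (step_extends S4).
have X1f := extends_trans X14 (run_extends R4).
have c_i'' := final_store_committed F (extends_is_store X1f st_i'').
have [c4 | nc4] := boolP (sC s4 t i''); last first.
  have [m1 [k' [m2 [_ [_ [-> _ _ _]]]]]] :=
    run_store_commit R4 (extends_is_store X14 st_i'') (addr_extends X14 a_i'') nc4 c_i''.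
  by exists k'; apply: List.in_elt.
exfalso.
have c3 : sC s3 t i''.
  apply/negPn/negP => nc3; case: (step_commits S4 nc3 c4) => [// | [k2 [a2 []]]].
  by move=> ei; move: lt_i''; rewrite ei ltnn.
have nc2 : ~~ sC s2 t i'' by rewrite E2.
have /andP[i'0 _] := is_store_fetched st3.
have := run_commit_order (step_wf W1 S) R3 (extends_is_store X12 st_i'')
  (addr_extends X12 a_i'') nc2 c3 (introT andP (conj i'0 lt_i'')) st3 a3.
by case: cc3 => _ /negP.
Qed.

Lemma run_of_early_read_trace trs sf t i i' a :
  run (init_state D Reg) trs sf -> final zero sf ->
  early_read_trace t i i' a (run_events trs) ->
  exists tr1 tr2, trs = tr1 ++ TEarly Reg t i i' a :: tr2.
Proof.
move=> R F [k [sig1 [sig2 [sig3 [lt_i' E no_commit]]]]].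
have [tr1 [tr [tr2 [Etrs E2 load_tr]]]] := run_events_load E.
have [tr3 [tr4 [Etr2 E3]]] := run_events_commitst (esym E2).
rewrite Etrs in R; have [s1 [s2 [R1 S R2]]] := run_split R.
have W1 := run_wf (@wf_init D zero Reg) R1.
have i'i : i' < i by lia.
have commit_i' : List.In (TCommitSt Reg t i' k a) tr2.
  by rewrite Etr2; apply: List.in_elt.
case: load_tr => [Etr | [i'' Etr]]; subst tr.
  have [ld_i a_i E_s2] := step_loadmem_inv S.
  have X1f := extends_trans (step_extends S) (run_extends R2).
  have L_i : sL sf t i = Some (sprop s1 t a).
    by apply: (run_extends R2).2; rewrite E_s2 /= /upd2 !eqxx.
  have R1f := run_cons S R2.
  have [_ co_eq] := run_keyed W1 R1f (wf_prop_keyed t a W1).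
  have := final_read_newer W1 R1f F (or_intror commit_i') i'i
    (extends_is_load X1f ld_i) (addr_extends X1f a_i) L_i.
  by rewrite co_eq ltxx.
rewrite Etr2 in R2; have [s3 [s4 [R3 S4 R4]]] := run_split R2.
have [[_ _ /andP[_ i''i] _ _] _] := step_early_inv S.
have [st3 _ a3 _ _] := step_commitst_inv S4.
have lt0_i' : 0 < i' < i by rewrite i'i andbT; case/andP: lt_i'.
have le_i'' := early_read_source_ge W1 S R3 lt0_i' st3 a3.
case: (ltngtP i' i'') le_i'' => [lt_i'' _ | // | -> _]; last by exists tr1, tr2.
have [k' in_tr4] := early_read_source_commit W1 S R3 S4 R4 F lt_i''.
exfalso; apply: (no_commit i'' k'); first by rewrite lt_i''.
by rewrite E3; right; apply/in_run_events_commitst.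
Qed.
End Traces.

Theorem lemma4 (D : finType) (zero : D) (Reg : finType) (P : program D Reg)
  (sigma : seq (event D Reg)) (trs : seq (trans D Reg)) (sf : state D Reg)
  (t i i' : nat) :
  run zero P (init_state D Reg) trs sf -> final zero sf ->
  sigma = run_events trs ->
  ((exists a tr1 tr2, trs = tr1 ++ TEarly Reg t i i' a :: tr2) <->
   (exists a k sigma1 sigma2 sigma3,
      [/\ (0 < i' <= i.-1)%N,
          sigma = sigma1 ++ EvLoad Reg t i a :: sigma2 ++ EvCommitSt Reg t i' k a :: sigma3 &
          forall j k', (i' < j < i)%N -> ~ List.In (EvCommitSt Reg t j k' a) sigma3])).
Proof.
move=> R F ->; split.
- by move=> [a [tr1 [tr2 Etrs]]]; subst trs; exists a; apply: early_read_trace_of_run R F.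
- by move=> [a trace]; exists a; apply: run_of_early_read_trace R F trace.
Qed.
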